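(* Let $F$ be a commutative field, $\Sigma=\mathrm{PG}(n,F)$, $1\le h\le n-1$, and let $K$ be a linear complex of $h$-subspaces of $\Sigma$. Let $U\subseteq W$ be subspaces of $\Sigma$ with $\dim U\le h-1$ and $\dim W\ge h+1$, and put $K(U,W):=K\cap[U,W]_h$ (the elements of $K$ containing $U$ and contained in $W$). If $[U,W]_h\not\subseteq K$, then $K(U,W)$ is a linear complex of $(h-1-\dim U)$-subspaces in the projective space $[U,W]$.
   Context: A $d$-subspace is a projective subspace of dimension $d$; $[U,W]$ denotes the set of subspaces $X$ with $U\subseteq X\subseteq W$, and $[U,W]_d$ its members of dimension $d$. With $\dim U=k-1$, $[U,W]$ is a projective space isomorphic to $\mathrm{PG}(\dim W-k,F)$, whose $d$-dimensional subspaces are the $(k+d)$-subspaces of $\Sigma$ in $[U,W]$. Linear complex: let $N=\binom{n+1}{h+1}-1$ and let $\wp_{n,h}$ be the Plücker embedding sending the $h$-subspace spanned by linearly independent $v_0,\dots,v_h\in F^{n+1}$ to the point $F(v_0\wedge\cdots\wedge v_h)$ of $\mathrm{PG}(N,F)=\mathbb P(\bigwedge^{h+1}F^{n+1})$; its image is the Grassmann variety $\mathcal G_{n,h}$. A linear complex of $h$-subspaces is a set of the form $(H\cap\mathcal G_{n,h})^{\wp_{n,h}^{-1}}$ for a hyperplane $H$ of $\mathrm{PG}(N,F)$, i.e. the set of $h$-subspaces whose Plücker image lies in $H$. Linear complexes in the projective space $[U,W]$ are defined in the same way via an identification of $[U,W]$ with $\mathrm{PG}(\dim W-\dim U-1,F)$.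 *)

From HB Require Import structures.
From mathcomp Require Import all_boot all_order all_algebra.
Set Implicit Arguments. Unset Strict Implicit. Unset Printing Implicit Defensive.
Import GRing.Theory.
Local Open Scope ring_scope.

(* Projective geometry PG(m-1, F) is modelled by the vector space 'rV[F]_m:
   a projective d-subspace is a vector subspace X : {vspace 'rV[F]_m}
   with \dim X = d+1 (the empty projective subspace has \dim X = 0). *)

(* The (k x k) minor of M : 'M_(k, m) on the columns in S (a k-subset of
   column indices, taken in increasing order); 0 if #|S| <> k. *)
Definition minor_at (F : fieldType) (k m : nat) (M : 'M[F]_(k, m))
    (S : {set 'I_m}) : F :=
  if #|S| == k then
    match enum S with
    | [::] => 1
    | s0 :: _ => \det (\matrix_(i < k, j < k) M i (nth s0 (enum S) j))
    end
  else 0.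

Definition basis_mx (F : fieldType) (m : nat) (X : {vspace 'rV[F]_m}) :
    'M[F]_(\dim X, m) :=
  \matrix_(i < \dim X, j < m) (tnth (vbasis X) i) 0 j.

(* Plücker coordinates of X w.r.t. the standard basis e_S (S a
   (\dim X)-subset of {0..m-1}) of the exterior power: the maximal minors
   of a basis matrix.  F(v_0 /\ ... /\ v_h) = [plucker X]. *)
Definition plucker (F : fieldType) (m : nat) (X : {vspace 'rV[F]_m})
    (S : {set 'I_m}) : F := minor_at (basis_mx X) S.

(* K is a linear complex of projective (k-1)-subspaces of PG(m-1,F):
   K is the set of (k-1)-subspaces whose Plücker image lies in the
   hyperplane  sum_{#|S| = k} a_S p_S = 0  (a nonzero linear form). *)
Definition is_linear_complex (F : fieldType) (m k : nat)
    (K : {vspace 'rV[F]_m} -> Prop) : Prop :=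
  exists a : {set 'I_m} -> F,
    (exists S : {set 'I_m}, #|S| = k /\ a S != 0) /\
    forall X : {vspace 'rV[F]_m},
      K X <-> (\dim X = k /\
               \sum_(S : {set 'I_m} | #|S| == k) a S * plucker X S = 0).

(* An identification of the interval [U,W] with PG(d-1,F): a linear map g
   mapping W onto F^d with kernel (inside W) exactly U; it induces the
   bijection X |-> g(X) from [U,W] onto the subspaces of F^d. *)
Definition interval_identification (F : fieldType) (m d : nat)
    (U W : {vspace 'rV[F]_m}) (g : 'Hom('rV[F]_m, 'rV[F]_d)) : Prop :=
  (g @: W)%VS = fullv /\ (lker g :&: W)%VS = U.

Definition is_linear_complex_in (F : fieldType) (m k : nat)
    (U W : {vspace 'rV[F]_m}) (L : {vspace 'rV[F]_m} -> Prop) : Prop :=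
  exists (d : nat) (g : 'Hom('rV[F]_m, 'rV[F]_d)),
    interval_identification U W g /\
    is_linear_complex k
      (fun Y : {vspace 'rV[F]_d} =>
         exists X, L X /\ (U <= X)%VS /\ (X <= W)%VS /\ Y = (g @: X)%VS).

From HB Require Import structures.
From mathcomp Require Import all_boot all_order all_algebra all_fingroup zify.
Set Implicit Arguments. Unset Strict Implicit. Unset Printing Implicit Defensive.
Import GRing.Theory.
Local Open Scope ring_scope.

(* Split W as U (+) W' with W' := W :\: U and identify [U,W] with the
   subspaces of F^(dim W') through the projection g along U.  For X in [U,W],
   the rows of a basis of U together with lifts of a basis of Y := g X form a
   basis of X; expanding the maximal minors of this block matrix along its
   last rows (Cauchy-Binet) writes each Plucker coordinate of X as a linear
   combination of those of Y.  Hence sum_S a_S p_S(X) = c * sum_T b_T p_T(Y)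
   with c <> 0, where b_T is the form a evaluated at U + lift(e_T); b is
   nonzero because some element of [U,W]_h lies outside K. *)

Definition enum_nth (d k : nat) (y0 : 'I_d) (T : {set 'I_d}) (i : 'I_k) : 'I_d :=
  nth y0 (enum T) i.

Lemma enum_nth_inj d k (y0 : 'I_d) (T : {set 'I_d}) :
  #|T| = k -> injective (@enum_nth d k y0 T).
Proof.
move=> cardT i j /eqP; rewrite /enum_nth nth_uniq ?enum_uniq -?cardE ?cardT //.
by move/eqP/val_inj.
Qed.

Lemma enum_nth_mem d k (y0 : 'I_d) (T : {set 'I_d}) (i : 'I_k) :
  #|T| = k -> enum_nth y0 T i \in T.
Proof. by move=> cardT; rewrite -mem_enum mem_nth // -cardE cardT. Qed.

Lemma sum_injective_ffun (R : nmodType) d k (y0 : 'I_d) (phi : {ffun 'I_k -> 'I_d} -> R) :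
  \sum_(f : {ffun 'I_k -> 'I_d} | injectiveb f) phi f =
  \sum_(T : {set 'I_d} | #|T| == k) \sum_(s : 'S_k) phi [ffun i => enum_nth y0 T (s i)].
Proof.
rewrite (partition_big (fun f : {ffun 'I_k -> 'I_d} => [set f i | i : 'I_k])
           (fun T : {set 'I_d} => #|T| == k)) /=; last first.
  by move=> f /injectiveP f_inj; rewrite card_imset // card_ord.
apply: eq_bigr => T /eqP cardT.
set t := enum_nth y0 T.
have t_inj : injective t := enum_nth_inj cardT.
have indext i : index (t i) (enum T) = i.
  by rewrite index_uniq ?enum_uniq // -cardE cardT.
pose h (g : {ffun 'I_k -> 'I_k}) : {ffun 'I_k -> 'I_d} := [ffun i => t (g i)].
pose h' (f : {ffun 'I_k -> 'I_d}) : {ffun 'I_k -> 'I_k} :=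
  [ffun i => insubd i (index (f i) (enum T))].
rewrite (reindex_onto h h'); last first.
  move=> f /andP [_ /eqP im_f]; apply/ffunP => i; rewrite !ffunE.
  have fiT : f i \in T by rewrite -im_f imset_f.
  have lt_fi : (index (f i) (enum T) < k)%N.
    by move: (index_mem (f i) (enum T)); rewrite mem_enum fiT -cardE cardT.
  by rewrite /t /enum_nth val_insubd lt_fi nth_index ?mem_enum.
rewrite (eq_bigl (fun g : {ffun 'I_k -> 'I_k} => injectiveb g)); last first.
  move=> g; have -> : h' (h g) == g.
    by apply/eqP/ffunP => i; apply: val_inj; rewrite !ffunE val_insubd indext ltn_ord.
  rewrite andbT; have [/injectiveP g_inj | g_ninj] := boolP (injectiveb g).
    have hg_inj : injective (h g) by move=> i j; rewrite !ffunE => /t_inj/g_inj.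
    rewrite (introT (injectiveP _) hg_inj) /= eqEcard card_imset // card_ord cardT leqnn.
    by rewrite andbT; apply/subsetP => _ /imsetP [i _ ->]; rewrite ffunE enum_nth_mem.
  apply/negbTE; apply: contra g_ninj => /andP [/injectiveP hg_inj _].
  by apply/injectiveP => i j gij; apply: hg_inj; rewrite !ffunE gij.
rewrite (reindex (@pval _)) /=; last first.
  by exists (insubd (1%g : 'S_k)) => [s _ | f f_inj]; [exact: valKd | exact: insubdK].
apply: eq_big => [s | s _]; first by rewrite (valP s).
by congr phi; apply/ffunP => i; rewrite !ffunE pvalE.
Qed.

Section Minors.
Variable F : fieldType.

Lemma minor_atE q m (x0 : 'I_m) (M : 'M[F]_(q, m)) S :
  minor_at M S = if #|S| == q then \det (colsub (enum_nth x0 S) M) else 0.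
Proof.
rewrite /minor_at; case: eqP => // cardS.
case E: (enum S) => [|s0 s].
  have q0 : q = 0%N by rewrite -cardS cardE E.
  by move: M; rewrite q0 => M; rewrite det_mx00.
congr (\det _); apply/matrixP => i j; rewrite !mxE /enum_nth -E (set_nth_default x0) //.
by rewrite -cardE cardS ltn_ord.
Qed.

Lemma minor_at_mul q m (x0 : 'I_m) (P : 'M[F]_q) (M : 'M[F]_(q, m)) S :
  minor_at (P *m M) S = \det P * minor_at M S.
Proof.
by rewrite !(minor_atE x0); case: eqP; rewrite ?mulr0 // -mulmx_colsub det_mulmx.
Qed.

Lemma colsub_col_mx p1 p2 q m (g : 'I_q -> 'I_m) (A : 'M[F]_(p1, m)) (B : 'M[F]_(p2, m)) :
  colsub g (col_mx A B) = col_mx (colsub g A) (colsub g B).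
Proof. by apply/matrixP => i j; rewrite !mxE; case: splitP => i' _; rewrite !mxE. Qed.

Section LowerRowsExpansion.
Variables (r k d : nat) (C : 'M[F]_(r, r + k)) (B : 'M[F]_(d, r + k)).

Local Notation D f := (\det (col_mx C (rowsub f B))).

Lemma det_col_mx_mulmx_ffun (Y : 'M[F]_(k, d)) :
  \det (col_mx C (Y *m B)) = \sum_(f : {ffun 'I_k -> 'I_d}) (\prod_i Y i (f i)) * D f.
Proof.
pose Cs (s : 'S_(r + k)) := \prod_(i < r) C i (s (lshift k i)).
have DE (f : 'I_k -> 'I_d) :
    D f = \sum_(s : 'S_(r + k)) (-1) ^+ s * (Cs s * \prod_i B (f i) (s (rshift r i))).
  apply: eq_bigr => s _; rewrite big_split_ord /=; congr (_ * (_ * _)).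
    by apply: eq_bigr => i _; rewrite col_mxEu.
  by apply: eq_bigr => i _; rewrite col_mxEd mxE.
under eq_bigr do rewrite DE big_distrr /=.
rewrite exchange_big; apply: eq_bigr => s _.
rewrite big_split_ord /=.
under [X in _ * (_ * X)]eq_bigr do rewrite col_mxEd mxE.
rewrite (bigA_distr_bigA (fun i l => Y i l * B l (s (rshift r i)))) /=.
rewrite !big_distrr /=; apply: eq_bigr => f _.
rewrite big_split /=.
under [X in _ * (X * _)]eq_bigr do rewrite col_mxEu.
rewrite /Cs; set y := \prod_(i < k) Y i (f i).
by rewrite [_ * (y * _)]mulrCA; apply: mulrCA.
Qed.

Lemma det_col_mx_rowsub_noninj (f : {ffun 'I_k -> 'I_d}) : ~~ injectiveb f -> D f = 0.
Proof.
case/injectivePn => i1 [i2 neq_i12 eq_f].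
apply: (@determinant_alternate _ _ _ (rshift r i1) (rshift r i2)).
  by rewrite (inj_eq (@rshift_inj _ _)).
by move=> j; rewrite !col_mxEd !mxE eq_f.
Qed.

Lemma det_col_mx_rowsub_perm (t : 'I_k -> 'I_d) (s : 'S_k) :
  D (t \o s) = (-1) ^+ s * D t.
Proof.
have -> : col_mx C (rowsub (t \o s) B) = block_mx 1%:M 0 0 (perm_mx s) *m col_mx C (rowsub t B).
  rewrite mul_block_col !mul1mx !mul0mx addr0 add0r -row_permE.
  by congr col_mx; apply/matrixP => i j; rewrite !mxE.
by rewrite det_mulmx det_ublock det1 mul1r det_perm.
Qed.

Lemma det_col_mx_mulmx (y0 : 'I_d) (Y : 'M[F]_(k, d)) :
  \det (col_mx C (Y *m B)) =
  \sum_(T : {set 'I_d} | #|T| == k) minor_at Y T * D (enum_nth y0 T).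
Proof.
rewrite det_col_mx_mulmx_ffun (bigID (fun f : {ffun _} => injectiveb f)) /=.
rewrite [X in _ + X]big1 ?addr0 => [|f /det_col_mx_rowsub_noninj ->]; last by rewrite mulr0.
rewrite (sum_injective_ffun y0); apply: eq_bigr => T /eqP cardT.
rewrite (minor_atE y0) cardT eqxx big_distrl /=; apply: eq_bigr => s _.
have -> : rowsub [ffun i => enum_nth y0 T (s i)] B = rowsub (enum_nth y0 T \o s) B.
  by apply/matrixP => i j; rewrite !mxE ffunE.
rewrite det_col_mx_rowsub_perm mulrCA mulrA; congr (_ * _ * _).
by apply: eq_bigr => i _; rewrite !mxE ffunE.
Qed.

End LowerRowsExpansion.

Lemma minor_col_mx_mulmx r k d m (x0 : 'I_m) (y0 : 'I_d)
    (C : 'M[F]_(r, m)) (B : 'M[F]_(d, m)) (Y : 'M[F]_(k, d)) S :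
  minor_at (col_mx C (Y *m B)) S =
  \sum_(T : {set 'I_d} | #|T| == k)
     minor_at Y T * minor_at (col_mx C (rowsub (enum_nth y0 T : 'I_k -> _) B)) S.
Proof.
rewrite (minor_atE x0); under eq_bigr do rewrite (minor_atE x0).
case: eqP => _; last by rewrite big1 // => T _; rewrite mulr0.
rewrite colsub_col_mx -mulmx_colsub (det_col_mx_mulmx _ _ y0); apply: eq_bigr => T _.
by rewrite colsub_col_mx; congr (_ * \det (col_mx _ _)); apply/matrixP => i j; rewrite !mxE.
Qed.

End Minors.

Section BasisMatrix.
Variables (F : fieldType) (m : nat).
Implicit Types X : {vspace 'rV[F]_m}.

Lemma row_basis_mx X i : row i (basis_mx X) = (vbasis X)`_i.
Proof. by apply/rowP => j; rewrite !mxE (tnth_nth 0). Qed.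

Lemma row_basis_mx_mem X i : row i (basis_mx X) \in X.
Proof. by rewrite row_basis_mx vbasis_mem // mem_nth // size_tuple. Qed.

Lemma mulmx_basis_mx X (c : 'rV[F]_(\dim X)) :
  c *m basis_mx X = \sum_i c 0 i *: (vbasis X)`_i.
Proof. by rewrite mulmx_sum_row; apply: eq_bigr => i _; rewrite row_basis_mx. Qed.

Lemma mulmx_basis_mx_mem X (c : 'rV[F]_(\dim X)) : c *m basis_mx X \in X.
Proof.
by rewrite mulmx_basis_mx memv_suml // => i _; rewrite memvZ // -row_basis_mx row_basis_mx_mem.
Qed.

Lemma coord_basis_mx X v : v \in X -> v = \row_i coord (vbasis X) i v *m basis_mx X.
Proof.
by move=> vX; rewrite mulmx_basis_mx {1}(coord_vbasis vX); apply: eq_bigr => i _; rewrite mxE.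
Qed.

Lemma row_free_basis_mx X : row_free (basis_mx X).
Proof.
apply: inj_row_free => c; rewrite mulmx_basis_mx => c0.
have /freeP/(_ _ c0) c_eq0 := basis_free (vbasisP X).
by apply/rowP => i; rewrite mxE c_eq0.
Qed.

Lemma basis_mx_spans p X (A : 'M[F]_(p, m)) :
  (forall i, row i A \in X) -> exists Q, A = Q *m basis_mx X.
Proof.
move=> AX; exists (\matrix_i \row_j coord (vbasis X) j (row i A)).
by apply/row_matrixP => i; rewrite row_mul rowK -coord_basis_mx.
Qed.

Lemma plucker_row_basis (x0 : 'I_m) X p (M : 'M[F]_(p, m)) :
  \dim X = p -> (forall i, row i M \in X) -> row_free M ->
  exists2 c : F, c != 0 & forall S, plucker X S = c * minor_at M S.
Proof.
move=> dimX MX; have [Q ->] := basis_mx_spans MX; rewrite /plucker.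
move: (basis_mx X) Q; rewrite dimX => A Q freeQA.
have Qu : Q \in unitmx.
  rewrite -row_free_unit /row_free eqn_leq rank_leq_row /=.
  by rewrite -{1}(eqP freeQA) mxrankM_maxl.
exists (\det Q)^-1; first by rewrite invr_eq0 -unitfE -unitmxE.
by move=> S; rewrite (minor_at_mul x0) mulrA mulVf ?mul1r // -unitfE -unitmxE.
Qed.

End BasisMatrix.

Section IntervalProjection.
Variables (F : fieldType) (m : nat) (U W : {vspace 'rV[F]_m}).
Local Notation W' := (W :\: U)%VS.

Lemma row_free_col_basis_mx : row_free (col_mx (basis_mx U) (basis_mx W')).
Proof.
apply: inj_row_free => z; rewrite -[z]hsubmxK mul_row_col => z0.
set u := lsubmx z *m _ in z0; set w := rsubmx z *m _ in z0.
have w0 : w = 0.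
  apply/eqP; rewrite -memv0 -(capv_diff W U) memv_cap mulmx_basis_mx_mem /=.
  by rewrite -(addr0_eq z0) rpredN mulmx_basis_mx_mem.
have u0 : u = 0 by rewrite -[u]addr0 -w0 z0.
have l0 : lsubmx z = 0.
  by apply/eqP; rewrite -(mulmx_free_eq0 _ (row_free_basis_mx U)) -/u u0.
have r0 : rsubmx z = 0.
  by apply/eqP; rewrite -(mulmx_free_eq0 _ (row_free_basis_mx W')) -/w w0.
by rewrite l0 r0 row_mx0.
Qed.

Definition interval_coord_mx : 'M[F]_(m, \dim (W :\: U)) :=
  pinvmx (col_mx (basis_mx U) (basis_mx (W :\: U))) *m col_mx 0 1%:M.

Lemma interval_coord_mxE :
  basis_mx U *m interval_coord_mx = 0 /\ basis_mx W' *m interval_coord_mx = 1%:M.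
Proof.
by apply/eq_col_mx; rewrite -mul_col_mx mulmxA mulmxVp ?mul1mx ?row_free_col_basis_mx.
Qed.

Definition interval_proj : 'Hom('rV[F]_m, 'rV[F]_(\dim (W :\: U))) :=
  linfun (mulmxr interval_coord_mx).

Definition interval_lift : 'Hom('rV[F]_(\dim (W :\: U)), 'rV[F]_m) :=
  linfun (mulmxr (basis_mx (W :\: U))).

Local Notation g := interval_proj.
Local Notation lift := interval_lift.

Lemma interval_projE x : g x = x *m interval_coord_mx.
Proof. exact: lfunE. Qed.

Lemma interval_liftE y : lift y = y *m basis_mx W'.
Proof. exact: lfunE. Qed.

Lemma interval_proj_eq0 u : u \in U -> g u = 0.
Proof.
move=> uU; rewrite interval_projE (coord_basis_mx uU) -mulmxA.
by rewrite interval_coord_mxE.1 mulmx0.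
Qed.

Lemma interval_lift_mem y : lift y \in W'.
Proof. by rewrite interval_liftE mulmx_basis_mx_mem. Qed.

Lemma interval_liftK : cancel lift g.
Proof.
by move=> y; rewrite interval_projE interval_liftE -mulmxA interval_coord_mxE.2 mulmx1.
Qed.

Hypothesis UW : (U <= W)%VS.

Lemma interval_proj_sub_lift w : w \in W -> w - lift (g w) \in U.
Proof.
have addW' : (W' + U = W)%VS by rewrite addv_diff; apply/addv_idPl.
move=> wW; have : w \in (W' + U)%VS by rewrite addW'.
case/memv_addP => w' w'W' [u uU ->].
rewrite linearD /= (interval_proj_eq0 uU) addr0.
rewrite [X in lift (g X)](coord_basis_mx w'W') -interval_liftE interval_liftK.
by rewrite interval_liftE -(coord_basis_mx w'W') addrAC subrr add0r.
Qed.

Lemma interval_identification_proj : interval_identification U W g.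
Proof.
split.
  apply/eqP; rewrite eqEsubv subvf /=; apply/subvP => y _.
  by rewrite -(interval_liftK y) memv_img // (subvP (diffvSl W U)) ?interval_lift_mem.
apply/eqP; rewrite eqEsubv; apply/andP; split; apply/subvP => w.
  case/memv_capP; rewrite memv_ker => /eqP gw0 wW.
  by have := interval_proj_sub_lift wW; rewrite gw0 linear0 subr0.
by move=> uU; rewrite memv_cap memv_ker (interval_proj_eq0 uU) eqxx (subvP UW).
Qed.

Lemma dim_interval X :
  (U <= X)%VS -> (X <= W)%VS -> \dim X = (\dim U + \dim (g @: X))%N.
Proof.
move=> UX XW; rewrite -(limg_ker_dim g X); congr (\dim _ + _)%N.
apply/eqP; rewrite eqEsubv; apply/andP; split; apply/subvP => w.
  case/memv_capP => wX; rewrite memv_ker => /eqP gw0.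
  by have := interval_proj_sub_lift (subvP XW w wX); rewrite gw0 linear0 subr0.
by move=> uU; rewrite memv_cap memv_ker (interval_proj_eq0 uU) eqxx (subvP UX).
Qed.

Definition interval_preimage (Y : {vspace 'rV[F]_(\dim (W :\: U))}) :=
  (U + lift @: Y)%VS.

Lemma sub_interval_preimage Y : (U <= interval_preimage Y)%VS.
Proof. exact: addvSl. Qed.

Lemma interval_preimage_sub Y : (interval_preimage Y <= W)%VS.
Proof.
rewrite subv_add UW /=; apply/subvP => _ /memv_imgP [y _ ->].
by rewrite (subvP (diffvSl W U)) ?interval_lift_mem.
Qed.

Lemma interval_proj_preimage Y : (g @: interval_preimage Y)%VS = Y.
Proof.
have gU0 : (g @: U = 0)%VS.
  by apply/eqP; rewrite -lkerE; apply/subvP => u uU; rewrite memv_ker interval_proj_eq0.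
rewrite limgD gU0 add0v -limg_comp (_ : (g \o lift)%VF = \1%VF) ?lim1g //.
by apply/lfunP => y; rewrite comp_lfunE id_lfunE interval_liftK.
Qed.

(* The minor of the block matrix is the Plucker coordinate of U + lift(e_T). *)
Definition interval_form (a : {set 'I_m} -> F) (k : nat) (y0 : 'I_(\dim (W :\: U)))
    (T : {set 'I_(\dim (W :\: U))}) : F :=
  \sum_(S : {set 'I_m} | #|S| == (\dim U + k)%N)
     a S * minor_at (col_mx (basis_mx U)
                            (rowsub (enum_nth y0 T : 'I_k -> _) (basis_mx W'))) S.

Lemma interval_form_plucker (x0 : 'I_m) (y0 : 'I_(\dim W')) a k X :
  (U <= X)%VS -> (X <= W)%VS -> \dim (g @: X) = k ->
  exists2 c : F, c != 0 &
    \sum_(S : {set 'I_m} | #|S| == \dim X) a S * plucker X S =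
    c * \sum_(T : {set 'I_(\dim W')} | #|T| == k) interval_form a k y0 T * plucker (g @: X) T.
Proof.
move=> UX XW <-; set Y := (g @: X)%VS.
pose M := col_mx (basis_mx U) (basis_mx Y *m basis_mx W').
have MX i : row i M \in X.
  rewrite -(splitK i); case: (split i) => i' /=; rewrite ?rowKu ?rowKd.
    by apply: (subvP UX); apply: row_basis_mx_mem.
  rewrite row_mul -interval_liftE; have /memv_imgP [x xX ->] := row_basis_mx_mem (X := Y) i'.
  rewrite -[lift _](subKr x) rpredB // (subvP UX) //.
  exact: interval_proj_sub_lift (subvP XW _ xX).
have freeM : row_free M.
  apply: inj_row_free => z; rewrite -[z]hsubmxK mul_row_col => z0.
  have := congr1 (mulmxr interval_coord_mx) z0.
  rewrite /= mul0mx mulmxDl -!mulmxA interval_coord_mxE.1 interval_coord_mxE.2.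
  rewrite mulmx0 mulmx1 add0r => /eqP.
  rewrite mulmx_free_eq0 ?row_free_basis_mx // => /eqP r0.
  move: z0; rewrite r0 mul0mx addr0 => /eqP; rewrite mulmx_free_eq0 ?row_free_basis_mx //.
  by move=> /eqP->; rewrite row_mx0.
have [c c0 pluckerX] := plucker_row_basis x0 (dim_interval UX XW) MX freeM.
exists c => //; rewrite (dim_interval UX XW).
under eq_bigr do rewrite pluckerX (minor_col_mx_mulmx x0 y0) mulrCA big_distrr.
rewrite -big_distrr exchange_big /=; congr (_ * _); apply: eq_bigr => T _.
by rewrite /interval_form big_distrl; apply: eq_bigr => S _; rewrite mulrCA mulrC.
Qed.

Lemma dim_interval_proj k X :
  (U <= X)%VS -> (X <= W)%VS -> \dim X = (\dim U + k)%N -> \dim (g @: X) = k.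
Proof. by move=> UX XW; rewrite (dim_interval UX XW) => /addnI. Qed.

Lemma interval_form_plucker_eq0 (x0 : 'I_m) (y0 : 'I_(\dim W')) a k X :
  (U <= X)%VS -> (X <= W)%VS -> \dim X = (\dim U + k)%N ->
  \sum_(S : {set 'I_m} | #|S| == (\dim U + k)%N) a S * plucker X S = 0 <->
  \sum_(T : {set 'I_(\dim W')} | #|T| == k) interval_form a k y0 T * plucker (g @: X) T = 0.
Proof.
move=> UX XW dimX.
have [c c0] := interval_form_plucker x0 y0 a UX XW (dim_interval_proj UX XW dimX).
rewrite dimX => ->.
by split => [/eqP | ->]; rewrite ?mulr0 // mulf_eq0 (negbTE c0) => /eqP.
Qed.

End IntervalProjection.

Theorem proposition5p2 (F : fieldType) (n h : nat)
    (K : {vspace 'rV[F]_(n.+1)} -> Prop)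
    (U W : {vspace 'rV[F]_(n.+1)}) :
  (1 <= h)%N -> (h <= n - 1)%N ->
  is_linear_complex h.+1 K ->
  (U <= W)%VS ->
  (\dim U <= h)%N ->          (* dim U <= h - 1 (projectively) *)
  (h.+2 <= \dim W)%N ->       (* dim W >= h + 1 (projectively) *)
  (exists X : {vspace 'rV[F]_(n.+1)},
      (U <= X)%VS /\ (X <= W)%VS /\ \dim X = h.+1 /\ ~ K X) ->
  is_linear_complex_in (h.+1 - \dim U) U W
    (fun X => K X /\ (U <= X)%VS /\ (X <= W)%VS /\ \dim X = h.+1).
Proof.
move=> _ _ [a [_ Ka]] UW leUh leW [X0 [UX0 [X0W [dimX0 notKX0]]]].
set k := (h.+1 - \dim U)%N; have dimUk : (\dim U + k)%N = h.+1 by rewrite subnKC // leqW.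
have d_gt0 : (0 < \dim (W :\: U))%N.
  by move: leW leUh; rewrite -(dimv_cap_compl W U) (capv_idPr UW); lia.
pose y0 := Ordinal d_gt0; pose g := interval_proj U W.
have KE X : (U <= X)%VS -> (X <= W)%VS -> \dim X = h.+1 ->
    K X <-> \sum_(T : {set 'I__} | #|T| == k) interval_form a k y0 T * plucker (g @: X) T = 0.
  move=> UX XW dimX; rewrite -dimUk in dimX.
  by rewrite Ka -dimUk -(interval_form_plucker_eq0 UW ord0 y0 a UX XW dimX); split => [[] | ].
exists _, g; split; first exact: interval_identification_proj.
exists (interval_form a k y0); split.
  have [T /andP [/eqP cardT formT] | form0] :=
    pickP (fun T : {set 'I__} => (#|T| == k) && (interval_form a k y0 T != 0)).
    by exists T.
  exfalso; apply/notKX0/(KE _ UX0 X0W dimX0).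
  by rewrite big1 // => T cardT; move: (form0 T); rewrite cardT => /negbFE/eqP->; rewrite mul0r.
move=> Y; split.
  move=> [X [[KX [UX [XW dimX]]] [_ [_ ->]]]]; split; last exact/(KE X).
  by apply: dim_interval_proj; rewrite ?dimUk.
move=> [dimY sumY]; pose X := @interval_preimage _ _ U W Y.
have UX : (U <= X)%VS := sub_interval_preimage Y.
have XW : (X <= W)%VS := interval_preimage_sub UW Y.
have gX : (g @: X)%VS = Y := interval_proj_preimage Y.
have dimX : \dim X = h.+1 by rewrite (dim_interval UW UX XW) gX dimY.
by exists X; do !split => //; apply/(KE X); rewrite ?gX.
Qed.
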